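(* Every sequentially distorted subset of a group is strongly bounded.
   Context: A subset $A$ of a group $G$ is sequentially distorted if there is a sequence $(w_n)_{n\in\mathbb N}\subset\mathbb N$ such that for every sequence $(a_n)_{n\in\mathbb N}\subset A$ there is a finite subset $S\subset G$ with $a_n\in S^{w_n}$ for all $n$, where $S^k=\{s_1\cdots s_k: s_i\in S\}$. A subset of $G$ is strongly bounded if it has finite diameter with respect to every left-invariant metric on $G$. *)

From Stdlib Require Import Reals List.
Import ListNotations.
Open Scope R_scope.

Record is_group {G : Type} (mul : G -> G -> G) (e : G) (inv : G -> G) : Prop := {
  grp_assoc : forall x y z, mul x (mul y z) = mul (mul x y) z;
  grp_id_l  : forall x, mul e x = x;
  grp_id_r  : forall x, mul x e = x;
  grp_inv_l : forall x, mul (inv x) x = e;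
  grp_inv_r : forall x, mul x (inv x) = e
}.

Definition list_prod {G : Type} (mul : G -> G -> G) (e : G) (l : list G) : G :=
  fold_right mul e l.

(* g ∈ S^k, for a finite subset S of G given as a list:
   g = s_1 ⋯ s_k with each s_i ∈ S. *)
Definition in_power {G : Type} (mul : G -> G -> G) (e : G)
  (S : list G) (k : nat) (g : G) : Prop :=
  exists l : list G, length l = k /\ (forall s, In s l -> In s S) /\
                     g = list_prod mul e l.

Definition seq_distorted {G : Type} (mul : G -> G -> G) (e : G) (A : G -> Prop) : Prop :=
  exists w : nat -> nat,
    forall a : nat -> G, (forall n, A (a n)) ->
      exists S : list G, forall n, in_power mul e S (w n) (a n).

Definition left_inv_metric {G : Type} (mul : G -> G -> G) (d : G -> G -> R) : Prop :=
  (forall x y, 0 <= d x y) /\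
  (forall x y, d x y = 0 <-> x = y) /\
  (forall x y, d x y = d y x) /\
  (forall x y z, d x z <= d x y + d y z) /\
  (forall g x y, d (mul g x) (mul g y) = d x y).

Definition strongly_bounded {G : Type} (mul : G -> G -> G) (A : G -> Prop) : Prop :=
  forall d : G -> G -> R, left_inv_metric mul d ->
    exists M : R, forall x y, A x -> A y -> d x y <= M.

(* If a sequentially distorted set A were unbounded for a left-invariant
   metric d, pick a_n in A with d(e, a_n) > n w_n.  Distortion puts every a_n
   in S^(w_n) for one finite S, and left invariance makes d(e, -) subadditive,
   so d(e, a_n) <= w_n max_{s in S} d(e, s), which fails once n exceeds that
   maximum.  Boundedness of d(e, -) on A then bounds the diameter of A. *)
From Pilot Require Import Defs.
From Stdlib Require Import Reals List RList.
From Stdlib Require Import Classical ClassicalEpsilon Lra.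
Open Scope R_scope.

Section LeftInvariantMetric.

Variables (G : Type) (mul : G -> G -> G) (e : G) (d : G -> G -> R).
Hypothesis mul_e_r : forall x, mul x e = x.
Hypothesis Hd : left_inv_metric mul d.

Lemma dist_mul_le (x y : G) : d e (mul x y) <= d e x + d e y.
Proof.
  destruct Hd as (_ & _ & _ & Htri & Hinv).
  rewrite <- (Hinv x e y), mul_e_r.
  apply Htri.
Qed.

Lemma dist_list_prod_le (C : R) (l : list G) :
  (forall s, In s l -> d e s <= C) -> d e (Defs.list_prod mul e l) <= INR (length l) * C.
Proof.
  unfold Defs.list_prod; induction l as [|s l IH]; intros Hl; cbn [fold_right length].
  - destruct Hd as (_ & Hzero & _).
    rewrite (proj2 (Hzero e e) eq_refl), Rmult_0_l; apply Rle_refl.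
  - rewrite S_INR.
    pose proof (dist_mul_le s (fold_right mul e l)).
    specialize (IH (fun t Ht => Hl t (or_intror Ht))).
    specialize (Hl s (or_introl eq_refl)).
    lra.
Qed.

Lemma dist_in_power_le (S : list G) (k : nat) (g : G) :
  in_power mul e S k g -> d e g <= INR k * MaxRlist (map (d e) S).
Proof.
  intros (l & <- & HlS & ->).
  apply dist_list_prod_le.
  intros s Hs; apply MaxRlist_P1, in_map, HlS, Hs.
Qed.

Lemma seq_distorted_dist_from_e_bounded (A : G -> Prop) :
  seq_distorted mul e A -> exists M, forall a, A a -> d e a <= M.
Proof.
  intros [w Hw]; apply NNPP; intros Hunbounded.
  assert (Hfar : forall n : nat, exists a, A a /\ INR n * INR (w n) < d e a).
  { intros n; apply NNPP; intros Hnear.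
    apply Hunbounded; exists (INR n * INR (w n)); intros a Ha.
    apply Rnot_lt_le; intros Hlt; apply Hnear; eauto. }
  destruct (choice _ Hfar) as [a Ha].
  destruct (Hw a (fun n => proj1 (Ha n))) as [S HS].
  destruct (INR_unbounded (MaxRlist (map (d e) S))) as [n Hn].
  pose proof (dist_in_power_le _ _ _ (HS n)) as Hle.
  pose proof (proj2 (Ha n)) as Hgt.
  assert (INR (w n) * MaxRlist (map (d e) S) <= INR (w n) * INR n)
    by (apply Rmult_le_compat_l; [apply pos_INR | lra]).
  lra.
Qed.

Lemma dist_le_of_dist_from_e_le (A : G -> Prop) (M : R) :
  (forall a, A a -> d e a <= M) -> forall x y, A x -> A y -> d x y <= 2 * M.
Proof.
  intros HM x y Hx Hy.
  destruct Hd as (_ & _ & Hsym & Htri & _).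
  pose proof (Htri x e y); rewrite (Hsym x e) in *.
  pose proof (HM x Hx); pose proof (HM y Hy).
  lra.
Qed.

End LeftInvariantMetric.

Theorem lemma3p3 (G : Type) (mul : G -> G -> G) (e : G) (inv : G -> G)
  (HG : is_group mul e inv) (A : G -> Prop) :
  seq_distorted mul e A -> strongly_bounded mul A.
Proof.
  intros Hdist d Hd.
  destruct (seq_distorted_dist_from_e_bounded G mul e d (grp_id_r _ _ _ HG) Hd A Hdist)
    as [M HM].
  exists (2 * M).
  exact (dist_le_of_dist_from_e_le G mul e d Hd A M HM).
Qed.
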